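(* Let $A$ be an alphabet of size $k$ with $k>1$, and suppose $L\subseteq A^*$ is $n$-PT. Then the canonical (minimal) DFA for $L$ has at most $m$ states, where $\log m = k\left(\frac{n+2k-3}{k-1}\right)^{k-1}\log n\,\log k$, with $\log$ denoting the logarithm to base $2$. Thus, for fixed $k$, the number of states of the canonical DFA of $L$ is in $2^{O(n^{k-1}\log n)}$ where $n=h(L)$.
   Context: For $n\in\mathbb{N}$, $u\sim_n v$ iff $u$ and $v$ have exactly the same (scattered) subwords of length at most $n$. A language $L\subseteq A^*$ is $n$-PT if it is a union of $\sim_n$-classes; $h(L)$ is the least $n$ such that $L$ is $n$-PT. *)

From mathcomp Require Import all_boot.
From Stdlib Require Import Reals.
Set Implicit Arguments. Unset Strict Implicit. Unset Printing Implicit Defensive.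

Definition language (A : finType) := seq A -> Prop.

Definition sim_n (A : finType) (n : nat) (u v : seq A) : Prop :=
  forall w : seq A, (size w <= n)%N -> subseq w u = subseq w v.

Definition n_PT (A : finType) (n : nat) (L : language A) : Prop :=
  forall u v : seq A, sim_n n u v -> (L u <-> L v).

(* Residual (left quotient) u^{-1} L ; the states of the canonical (minimal)
   DFA of L are exactly the distinct residuals u^{-1}L, u in A^*. *)
Definition residual (A : finType) (L : language A) (u : seq A) : language A :=
  fun w => L (u ++ w).

Definition residuals_distinct (A : finType) (L : language A) (u v : seq A) : Prop :=
  exists w, ~ (residual L u w <-> residual L v w).

(* The canonical DFA of L has at most m states: any family of words with
   pairwise distinct residuals has at most m members. *)
Definition canonical_dfa_states_le (A : finType) (L : language A) (m : R) : Prop :=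
  forall s : seq (seq A),
    (forall i j, (i < j)%N -> (j < size s)%N ->
       residuals_distinct L (nth [::] s i) (nth [::] s j)) ->
    (INR (size s) <= m)%R.

Definition log2 (x : R) : R := (ln x / ln 2)%R.

(* A word over an alphabet [B] factors as arches [v_1 a_1 ... v_r a_r z], where each
   arch [v a] ends at the first point where all of [B] has appeared and [z] misses a
   letter.  If [r >= n] the word embeds every word of length [n] over [B]; otherwise
   its [~_n]-class is determined by the [~_(n-r+1)]-classes of the [v_i] and the
   [~_(n-r)]-class of [z], all over smaller alphabets.  This yields a set of
   representatives of the [~_n]-classes whose size obeys a recursion in the alphabet
   size; words with distinct residuals lie in distinct classes because [~_n] is a
   right congruence, and the recursion is solved by induction on the alphabet size,
   using AM-GM to bound the contribution of the arches. *)

From mathcomp Require Import all_boot.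
From Stdlib Require Import Reals.
(* [Reals] rebinds [_ ^ _] in nat_scope to [Nat.pow]; re-importing [ssrnat]
   restores [expn]. *)
From mathcomp Require Import ssrnat zify.
From Stdlib Require Import Lia Lra Psatz.
Set Implicit Arguments. Unset Strict Implicit. Unset Printing Implicit Defensive.

Section Subsequences.
Variable T : eqType.
Implicit Types s t u v w : seq T.

Lemma subseq_cat_split w u t :
  subseq w (u ++ t) -> exists w1 w2, [/\ w = w1 ++ w2, subseq w1 u & subseq w2 t].
Proof.
elim: u w => [|x u IHu] w /=; first by move=> sub_w; exists [::], w.
case: w => [|y w] /=; first by exists [::], [::]; rewrite !sub0seq.
case: ifP => [/eqP -> | _] /IHu [w1 [w2 [-> sub1 sub2]]].
  by exists (x :: w1), w2; rewrite /= eqxx.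
by exists w1, w2; split=> //; apply: subseq_trans sub1 (subseq_cons _ _).
Qed.

Lemma subseq_cat_greedy w v t : subseq w (v ++ t) ->
  exists w1 w2, [/\ w = w1 ++ w2, subseq w1 v, subseq w2 t &
     forall c y, w2 = c :: y -> ~~ subseq (rcons w1 c) v].
Proof.
move=> /subseq_cat_split [w1 [w2 [Ew sub1 sub2]]].
pose good i := [&& i <= size w, subseq (take i w) v & subseq (drop i w) t].
have good_w1 : good (size w1).
  by rewrite /good Ew take_size_cat // drop_size_cat // sub1 sub2 size_cat leq_addr.
have good_le i : good i -> i <= size w by case/and3P.
case: (ex_maxnP (ex_intro good _ good_w1) good_le) => i /and3P [_ sub_take sub_drop] imax.
exists (take i w), (drop i w); split; rewrite ?cat_take_drop // => c y Edrop.
apply/negP => sub_c.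
have lt_i : i < size w by rewrite ltnNge; apply/negP => /drop_oversize; rewrite Edrop.
have drop_i := drop_nth c lt_i; rewrite Edrop in drop_i; case: drop_i => nth_i Ey.
suff /imax : good i.+1 by rewrite ltnn.
rewrite /good lt_i (take_nth c lt_i) -nth_i sub_c /= -Ey.
by apply: subseq_trans sub_drop; rewrite Edrop subseq_cons.
Qed.

Lemma subseq_flatten w (ss : seq (seq T)) :
  (forall s, s \in ss -> {subset w <= s}) -> size w <= size ss -> subseq w (flatten ss).
Proof.
elim: w ss => [|c w IHw] [|s ss] //= w_sub size_w; first by rewrite sub0seq.
rewrite -cat1s; apply: cat_subseq.
  by rewrite sub1seq (w_sub s (mem_head _ _)) ?mem_head.
apply: IHw => // s' s'_in x x_in.
by apply: (w_sub s'); rewrite inE ?s'_in ?x_in orbT.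
Qed.

Lemma pigeonhole_rel s (R : seq T) (P : T -> T -> Prop) x0 :
  (forall x, x \in s -> exists2 y, y \in R & P x y) ->
  (forall i j y, i < j -> j < size s -> P (nth x0 s i) y -> P (nth x0 s j) y -> False) ->
  size s <= size R.
Proof.
elim: s R => [|x s IHs] R //= s_rel s_inj.
have [y y_in Pxy] := s_rel x (mem_head _ _).
suff : size s <= size (filter (predC1 y) R).
  move/leq_ltn_trans; apply; rewrite size_filter -(count_predC (pred1 y) R).
  rewrite (eq_count (a2 := predC (pred1 y))) // addnC -addn1 leq_add2l -has_count.
  by apply/hasP; exists y => /=.
apply: IHs => [x' x'_in | i j y'].
  have [y' y'_in Py'] := s_rel x' (@mem_behead _ (x :: s) _ x'_in).
  exists y' => //; rewrite mem_filter y'_in andbT; apply/eqP => Ey.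
  have [j lt_j Ej] := nthP x0 x'_in.
  by apply: (s_inj 0 j.+1 y); rewrite //= ?Ej -?Ey.
by move=> lt_ij lt_j; apply: (s_inj i.+1 j.+1).
Qed.

End Subsequences.

Section Congruence.
Variables (A : finType) (n : nat).
Implicit Types u v w : seq A.

Lemma sim_n_sym u v : sim_n n u v -> sim_n n v u.
Proof. by move=> sim_uv w size_w; rewrite sim_uv. Qed.

Lemma sim_n_trans u v w : sim_n n u v -> sim_n n v w -> sim_n n u w.
Proof. by move=> sim_uv sim_vw x size_x; rewrite sim_uv // sim_vw. Qed.

Lemma sim_n_catr u v w : sim_n n u v -> sim_n n (u ++ w) (v ++ w).
Proof.
move=> sim_uv x size_x.
suff sub u' v' : sim_n n u' v' -> subseq x (u' ++ w) -> subseq x (v' ++ w).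
  by apply/idP/idP; apply: sub => //; apply: sim_n_sym.
move=> sim_uv' /subseq_cat_split [x1 [x2 [Ex sub1 sub2]]].
have size_x1 : size x1 <= n by rewrite (leq_trans _ size_x) // Ex size_cat leq_addr.
by rewrite Ex cat_subseq // -sim_uv'.
Qed.

Lemma sim_n_mem u v x : 0 < n -> sim_n n u v -> x \in u -> x \in v.
Proof. by move=> n_gt0 sim_uv; rewrite -!sub1seq sim_uv. Qed.

End Congruence.

Section Arches.
Variable A : finType.
Implicit Types (B : {set A}) (s t u v w z : seq A).

Definition letters_in B s := all (fun x => x \in B) s.
Definition covers B s := all (fun x => x \in s) (enum B).

Lemma coversP B s x : covers B s -> x \in B -> x \in s.
Proof. by move/allP => cov x_in; apply: cov; rewrite mem_enum. Qed.

Lemma letters_in_subseq B s t : subseq s t -> letters_in B t -> letters_in B s.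
Proof. by move=> /mem_subseq sub /allP t_in; apply/allP => x /sub /t_in. Qed.

Lemma letters_in_set0 s : letters_in set0 s -> s = [::].
Proof. by case: s => //= x s; rewrite inE. Qed.

Lemma covers_letters_in B s t : covers B t -> letters_in B s -> {subset s <= t}.
Proof. by move=> cov /allP s_in x /s_in; apply: coversP. Qed.

Lemma letters_in_subset B (C : {set A}) s : B \subset C -> letters_in B s -> letters_in C s.
Proof. by move=> /subsetP sub_BC; apply: sub_all. Qed.

Lemma letters_in_sim B n u v : 0 < n -> sim_n n u v -> letters_in B u -> letters_in B v.
Proof.
move=> n_gt0 sim_uv /allP u_in; apply/allP => x /(sim_n_mem n_gt0 (sim_n_sym sim_uv)).
exact: u_in.
Qed.

Definition arch B v a : Prop :=
  [/\ a \in B, letters_in (B :\ a) v & covers B (rcons v a)].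

Lemma arch_sim B n v v' a : 0 < n -> sim_n n v v' -> arch B v a -> arch B v' a.
Proof.
move=> n_gt0 sim_v [a_in letters_v cov_va]; split => //; first exact: letters_in_sim sim_v _.
apply/allP => x; rewrite mem_enum => x_in; have := coversP cov_va x_in.
by rewrite !mem_rcons !inE => /orP [-> // | /(sim_n_mem n_gt0 sim_v) ->]; rewrite orbT.
Qed.

Definition arch_word (ps : seq (seq A * A)) z := flatten [seq rcons p.1 p.2 | p <- ps] ++ z.

Lemma arch_word_cons v a ps z : arch_word ((v, a) :: ps) z = v ++ a :: arch_word ps z.
Proof. by rewrite /arch_word /= -catA cat_rcons. Qed.

Lemma letters_in_arch_word B ps z : (forall p, p \in ps -> arch B p.1 p.2) ->
  letters_in B z -> letters_in B (arch_word ps z).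
Proof.
move=> ps_arch letters_z; rewrite /letters_in all_cat; apply/andP; split => //.
apply/allP => x /flatten_mapP [p /ps_arch [a_in /allP letters_v _]].
by rewrite mem_rcons inE => /orP [/eqP -> // | /letters_v]; rewrite inE => /andP [].
Qed.

Lemma arch_word_universal B ps z w :
  (forall p, p \in ps -> covers B (rcons p.1 p.2)) -> letters_in B w -> size w <= size ps ->
  subseq w (arch_word ps z).
Proof.
move=> cov_ps letters_w size_w; apply: subseq_trans (prefix_subseq _ _).
apply: subseq_flatten => [s /mapP [p /cov_ps cov_p ->] | ]; last by rewrite size_map.
exact: covers_letters_in cov_p letters_w.
Qed.

Lemma first_covering_prefix B u : B != set0 -> covers B u ->
  exists v a t, [/\ u = v ++ a :: t, ~~ covers B v & covers B (rcons v a)].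
Proof.
move=> /set0Pn [x x_in]; elim/last_ind: u => [|u c IHu] cov_uc.
  by have := coversP cov_uc x_in.
have [cov_u | not_cov_u] := boolP (covers B u); last by exists u, c, [::]; rewrite cats1.
have [v [a [t [-> not_cov_v cov_va]]]] := IHu cov_u.
by exists v, a, (rcons t c); rewrite rcons_cat.
Qed.

Lemma arch_factorization B u : B != set0 -> letters_in B u ->
  exists ps z b, [/\ u = arch_word ps z, forall p, p \in ps -> arch B p.1 p.2,
                     b \in B & letters_in (B :\ b) z].
Proof.
move=> B_neq0; have [N size_u] := ubnP (size u).
elim: N u size_u => // N IHN u size_u letters_u.
have [cov_u | /allPn [b]] := boolP (covers B u); last first.
  rewrite mem_enum => b_in b_notin; exists [::], u, b; split => //.
  apply/allP => x x_in; rewrite !inE (allP letters_u x x_in) andbT.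
  by apply: contraNneq b_notin => <-.
have [v [a [t [Eu /allPn [b] ]]]] := first_covering_prefix B_neq0 cov_u.
rewrite mem_enum => b_in b_notin cov_va.
have Eb : b = a.
  by move: (coversP cov_va b_in); rewrite mem_rcons inE (negbTE b_notin) orbF => /eqP.
move: letters_u; rewrite Eu /letters_in all_cat /= => /and3P [letters_v a_in letters_t].
have [|ps [z [b' [Et ps_arch b'_in letters_z]]]] := IHN t _ letters_t.
  by move: size_u; rewrite Eu size_cat /=; lia.
exists ((v, a) :: ps), z, b'; split => //; first by rewrite Et arch_word_cons.
move=> p; rewrite inE => /orP [/eqP -> | /ps_arch //] /=; split => //.
apply/allP => x x_in; rewrite !inE (allP letters_v x x_in) andbT.
by apply: contraNneq b_notin => Exa; rewrite Eb -Exa.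
Qed.

End Arches.

Section ArchSimulation.
Variables (A : finType) (B : {set A}) (m : nat).
Hypothesis m_gt0 : 0 < m.
Implicit Types (t u v w z : seq A).

(* Either the first [m] letters of [w] embed in [v], hence in [v'], and the rest
   embeds in [t'] by universality; or the greedy split embeds fewer than [m] letters
   in [v] and, as [v a] covers [B], at least one letter in [v a], so at most
   [m.-1 + p] letters are left for [t]. *)
Lemma arch_step p v v' a t t' :
  sim_n m v v' -> covers B (rcons v a) -> letters_in B (v ++ a :: t) ->
  (forall x, letters_in B x -> size x <= p -> subseq x t') ->
  (forall x, size x <= m.-1 + p -> subseq x t -> subseq x t') ->
  forall w, size w <= m.-1 + p.+1 -> subseq w (v ++ a :: t) -> subseq w (v' ++ a :: t').
Proof.
move=> sim_v cov_va letters_vat univ_t' sub_tt' w size_w sub_w.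
have letters_w := letters_in_subseq sub_w letters_vat.
have [sub_take | not_sub_take] := boolP (subseq (take m w) v).
  rewrite -(cat_take_drop m w); apply: cat_subseq.
    by rewrite -sim_v // size_take_min geq_minl.
  apply: subseq_trans (subseq_cons _ a); apply: univ_t'.
    exact: letters_in_subseq (drop_subseq _ _) letters_w.
  by rewrite size_drop; lia.
have [w1 [[|c y] [Ew sub1 sub2 maximal]]] := subseq_cat_greedy sub_w.
  by move: not_sub_take; rewrite Ew cats0 (subseq_trans (take_subseq _ _) sub1).
have size_w1 : size w1 < m.
  rewrite ltnNge; apply: contra not_sub_take => le_m.
  by rewrite Ew takel_cat // (subseq_trans (take_subseq _ _) sub1).
have size_cy : size w = size w1 + (size y).+1 by rewrite Ew size_cat.
rewrite Ew; apply: cat_subseq; first by rewrite -sim_v // ltnW.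
have [Eca | neq_ca] := eqVneq c a.
  move: sub2; rewrite Eca /= eqxx => sub_y; apply: sub_tt' => //.
  by move: size_w; rewrite size_cy; move: (size w1) (size y) => s1 s2; lia.
move: sub2; rewrite /= (negbTE neq_ca) => sub_cy.
have c_in_v : c \in v.
  have c_in_B : c \in B by move: letters_w; rewrite Ew /letters_in all_cat /= => /and3P [].
  by move: (coversP cov_va c_in_B); rewrite mem_rcons inE (negbTE neq_ca).
have w1_gt0 : 0 < size w1.
  by case: w1 {sub1 size_w1 Ew size_cy} maximal => // /(_ c y erefl); rewrite /= sub1seq c_in_v.
apply: sub_tt' => //=.
by move: size_w w1_gt0; rewrite size_cy; move: (size w1) (size y) => s1 s2; lia.
Qed.

Lemma arch_word_subseq (qs : seq (seq A * seq A * A)) z z' :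
  (forall q, q \in qs -> [/\ sim_n m q.1.1 q.1.2, covers B (rcons q.1.1 q.2) &
                            covers B (rcons q.1.2 q.2)]) ->
  sim_n m.-1 z z' ->
  letters_in B (arch_word [seq (q.1.1, q.2) | q <- qs] z) ->
  forall w, size w <= m.-1 + size qs ->
  subseq w (arch_word [seq (q.1.1, q.2) | q <- qs] z) ->
  subseq w (arch_word [seq (q.1.2, q.2) | q <- qs] z').
Proof.
elim: qs => [|[[v v'] a] qs IHqs] qs_arch sim_z letters_vz w size_w.
  by rewrite /arch_word /= sim_z // -(addn0 m.-1).
have [sim_v cov_va cov_v'a] := qs_arch _ (mem_head _ _).
have {}qs_arch q : q \in qs -> _ := fun q_in => qs_arch q (@mem_behead _ (_ :: qs) _ q_in).
move: letters_vz size_w; rewrite /= !arch_word_cons => letters_vz size_w.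
apply: (arch_step sim_v cov_va letters_vz) size_w => [x letters_x size_x | x size_x].
  apply: arch_word_universal letters_x _; last by rewrite size_map.
  by move=> p /mapP [q /qs_arch [] _ _ cov_q ->].
apply: IHqs size_x => //.
by move: letters_vz; rewrite /letters_in all_cat /= => /and3P [].
Qed.

Lemma sim_arch_word (qs : seq (seq A * seq A * A)) z z' :
  (forall q, q \in qs -> [/\ sim_n m q.1.1 q.1.2, covers B (rcons q.1.1 q.2) &
                            covers B (rcons q.1.2 q.2)]) ->
  sim_n m.-1 z z' ->
  letters_in B (arch_word [seq (q.1.1, q.2) | q <- qs] z) ->
  letters_in B (arch_word [seq (q.1.2, q.2) | q <- qs] z') ->
  sim_n (m.-1 + size qs) (arch_word [seq (q.1.1, q.2) | q <- qs] z)
                         (arch_word [seq (q.1.2, q.2) | q <- qs] z').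
Proof.
move=> qs_arch sim_z letters_l letters_r w size_w; apply/idP/idP.
  exact: arch_word_subseq.
pose swap q : seq A * seq A * A := (q.1.2, q.1.1, q.2).
have E1 : [seq (q.1.1, q.2) | q <- map swap qs] = [seq (q.1.2, q.2) | q <- qs].
  by rewrite -map_comp.
have E2 : [seq (q.1.2, q.2) | q <- map swap qs] = [seq (q.1.1, q.2) | q <- qs].
  by rewrite -map_comp.
rewrite -E1 -E2; apply: arch_word_subseq; rewrite ?E1 ?size_map //.
  by move=> _ /mapP [q /qs_arch [sim_q cov1 cov2] ->]; split => //; apply: sim_n_sym.
exact: sim_n_sym.
Qed.

End ArchSimulation.

Section Representatives.
Variable A : finType.
Implicit Types (B : {set A}) (u w z : seq A).

Definition univ_word n B : seq A := flatten (nseq n (enum B)).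

Lemma letters_in_univ_word n B : letters_in B (univ_word n B).
Proof.
by apply/allP => x /flattenP [s]; rewrite mem_nseq => /andP [_ /eqP ->]; rewrite mem_enum.
Qed.

Lemma univ_word_universal n B w :
  letters_in B w -> size w <= n -> subseq w (univ_word n B).
Proof.
move=> /allP letters_w size_w; apply: subseq_flatten; last by rewrite size_nseq.
by move=> s; rewrite mem_nseq => /andP [_ /eqP ->] x /letters_w; rewrite mem_enum.
Qed.

Lemma sim_univ_word n B u : letters_in B u ->
  (forall w, letters_in B w -> size w <= n -> subseq w u) -> sim_n n u (univ_word n B).
Proof.
move=> letters_u univ_u w size_w; apply/idP/idP => sub_w.
  exact/univ_word_universal/size_w/(letters_in_subseq sub_w).
exact/univ_u/size_w/(letters_in_subseq sub_w)/letters_in_univ_word.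
Qed.

Fixpoint arch_reps (f : nat -> {set A} -> seq (seq A)) m B r : seq (seq A) :=
  if r is r'.+1 then
    [seq y ++ x | y <- [seq rcons v a | a <- enum B, v <- f m (B :\ a)],
                  x <- arch_reps f m B r']
  else [:: [::]].

(* A word over [B] with at least [n] arches is [~_n] to [univ_word n B]; one with
   [r < n] arches is determined up to [~_n] by the classes of its arches at level
   [n - r + 1] and of its tail at level [n - r], over smaller alphabets. *)
Fixpoint sim_reps k n B : seq (seq A) :=
  if k is k'.+1 then
    univ_word n B :: flatten [seq [seq x ++ z | x <- arch_reps (sim_reps k') (n - r + 1) B r,
               z <- flatten [seq sim_reps k' (n - r) (B :\ b) | b <- enum B]] | r <- iota 0 n]
  else [:: [::]].

Lemma arch_reps_mem f m B (ps : seq (seq A * A)) :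
  (forall p, p \in ps -> p.2 \in B /\ exists2 v', v' \in f m (B :\ p.2) & sim_n m p.1 v') ->
  exists qs : seq (seq A * seq A * A), [/\ [seq (q.1.1, q.2) | q <- qs] = ps,
    forall q, q \in qs -> sim_n m q.1.1 q.1.2 &
    flatten [seq rcons q.1.2 q.2 | q <- qs] \in arch_reps f m B (size ps)].
Proof.
elim: ps => [|[v a] ps IHps] ps_rep; first by exists [::].
have [a_in [v' v'_in sim_v]] := ps_rep _ (mem_head _ _).
have [qs [Eqs sim_qs qs_in]] := IHps (fun p p_in => ps_rep p (@mem_behead _ (_ :: ps) _ p_in)).
exists ((v, v', a) :: qs); split; first by rewrite /= Eqs.
  by move=> q; rewrite inE => /orP [/eqP -> // | /sim_qs].
apply/allpairsP; exists (rcons v' a, flatten [seq rcons q.1.2 q.2 | q <- qs]); split => //.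
by apply/allpairsPdep; exists a, v'; rewrite mem_enum.
Qed.

Section Completeness.
Variable k : nat.
Hypothesis sim_reps_k_complete : forall n B u, #|B| <= k -> letters_in B u ->
  exists2 r, r \in sim_reps k n B & sim_n n u r.

Lemma sim_reps_arch_case n B ps z b :
  #|B| <= k.+1 -> (forall p, p \in ps -> arch B p.1 p.2) -> b \in B ->
  letters_in (B :\ b) z -> size ps < n ->
  exists2 r, r \in sim_reps k.+1 n B & sim_n n (arch_word ps z) r.
Proof.
move=> card_B ps_arch b_in letters_z lt_ps_n.
have card_BD1 a : a \in B -> #|B :\ a| <= k.
  by move=> a_in; move: card_B; rewrite (cardsD1 a) a_in.
have tail_gt0 : 0 < n - size ps by rewrite subn_gt0.
have letters_zB := letters_in_subset (subD1set B b) letters_z.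
have [|qs [Eqs sim_qs qs_in]] := @arch_reps_mem (sim_reps k) (n - size ps).+1 B ps.
  move=> p /ps_arch [a_in letters_v _]; split=> //.
  by apply: sim_reps_k_complete letters_v; apply: card_BD1.
have [z' z'_in sim_z] := sim_reps_k_complete (n - size ps) (card_BD1 b b_in) letters_z.
have qs_arch q : q \in qs -> arch B q.1.1 q.2 /\ arch B q.1.2 q.2.
  move=> q_in; have q_arch : arch B q.1.1 q.2.
    by apply: (ps_arch (q.1.1, q.2)); rewrite -Eqs map_f.
  by split=> //; apply: arch_sim (sim_qs q q_in) q_arch.
exists (arch_word [seq (q.1.2, q.2) | q <- qs] z').
  rewrite inE; apply/orP; right; apply/flatten_mapP; exists (size ps); first by rewrite mem_iota.
  apply/allpairsP; exists (flatten [seq rcons q.1.2 q.2 | q <- qs], z'); split.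
  - by rewrite addn1.
  - by apply/flatten_mapP; exists b; rewrite ?mem_enum.
  - by rewrite /arch_word -map_comp.
have size_qs : size qs = size ps by rewrite -Eqs size_map.
have := @sim_arch_word _ B (n - size ps).+1 (ltn0Sn _) qs z z'.
rewrite Eqs succnK size_qs subnK ?(ltnW lt_ps_n) //; apply => //.
- by move=> q /[dup] /sim_qs sim_q /qs_arch [[_ _ cov1] [_ _ cov2]]; split.
- exact: letters_in_arch_word.
- apply: letters_in_arch_word => [p /mapP [q /qs_arch [_ q_arch] ->] // | ].
  exact: letters_in_sim tail_gt0 sim_z letters_zB.
Qed.

End Completeness.

Lemma sim_reps_complete k n B u : #|B| <= k -> letters_in B u ->
  exists2 r, r \in sim_reps k n B & sim_n n u r.
Proof.
elim: k n B u => [|k IHk] n B u card_B letters_u.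
  move: card_B letters_u; rewrite leqn0 cards_eq0 => /eqP -> /letters_in_set0 ->.
  by exists [::]; rewrite ?mem_head.
have univ_case : (forall w, letters_in B w -> size w <= n -> subseq w u) ->
    exists2 r, r \in sim_reps k.+1 n B & sim_n n u r.
  by move=> univ_u; exists (univ_word n B); [exact: mem_head | exact: sim_univ_word].
have [B0 | B_neq0] := eqVneq B set0.
  by apply: univ_case => w; rewrite B0 => /letters_in_set0 -> _; apply: sub0seq.
have [ps [z [b [Eu ps_arch b_in letters_z]]]] := arch_factorization B_neq0 letters_u.
have [le_n_ps | lt_ps_n] := leqP n (size ps).
  apply: univ_case => w letters_w size_w; rewrite Eu.
  apply: arch_word_universal letters_w (leq_trans size_w le_n_ps) => p.
  by case/ps_arch.
by rewrite Eu; apply: (sim_reps_arch_case IHk card_B ps_arch b_in letters_z lt_ps_n).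
Qed.

End Representatives.

Fixpoint rep_count (k n : nat) : nat :=
  if k is k'.+1 then
    1 + sumn [seq (k * rep_count k' (n - r + 1)) ^ r * (k * rep_count k' (n - r)) | r <- iota 0 n]
  else 1.

Lemma rep_countS k n : rep_count k.+1 n =
  1 + sumn [seq (k.+1 * rep_count k (n - r + 1)) ^ r * (k.+1 * rep_count k (n - r))
            | r <- iota 0 n].
Proof. by []. Qed.

Lemma leq_sumn_map (T : eqType) (s : seq T) (f g : T -> nat) :
  (forall x, x \in s -> f x <= g x) -> sumn (map f s) <= sumn (map g s).
Proof.
elim: s => //= x s IHs le_fg; rewrite leq_add ?le_fg ?mem_head // IHs // => y y_in.
by rewrite le_fg // inE y_in orbT.
Qed.

Lemma sumn_map_le_const (T : eqType) (s : seq T) (f : T -> nat) c :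
  (forall x, x \in s -> f x <= c) -> sumn (map f s) <= size s * c.
Proof.
move=> le_fc; apply: leq_trans (leq_sumn_map le_fc) _.
suff -> : sumn [seq c | _ <- s] = size s * c by [].
by elim: s {le_fc} => //= x s ->; rewrite mulSn.
Qed.

Lemma leq_expn2r a b r : a <= b -> a ^ r <= b ^ r.
Proof. by case: r => // r le_ab; rewrite leq_exp2r. Qed.

Section RepresentativeCount.
Variable A : finType.

Lemma size_arch_reps (f : nat -> {set A} -> seq (seq A)) m B r :
  size (arch_reps f m B r) = (sumn [seq size (f m (B :\ a)) | a <- enum B]) ^ r.
Proof. by elim: r => // r IHr; rewrite /= size_allpairs IHr size_allpairs_dep expnS. Qed.

Lemma size_sim_reps k n (B : {set A}) : #|B| <= k -> size (sim_reps k n B) <= rep_count k n.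
Proof.
elim: k n B => [|k IHk] n B card_B //=.
rewrite add1n ltnS size_flatten /shape -map_comp; apply: leq_sumn_map => r _ /=.
rewrite size_allpairs size_arch_reps size_flatten /shape -map_comp.
have size_level j : sumn [seq size (sim_reps k j (B :\ a)) | a <- enum B] <= k.+1 * rep_count k j.
  apply: (@leq_trans (size (enum B) * rep_count k j)); last by rewrite -cardE leq_mul.
  apply: sumn_map_le_const => a; rewrite mem_enum => a_in.
  by apply: IHk; move: card_B; rewrite (cardsD1 a) a_in.
by rewrite leq_mul ?leq_expn2r ?size_level.
Qed.

End RepresentativeCount.

Lemma residuals_distinct_count (A : finType) n (L : language A) (s : seq (seq A)) :
  n_PT n L ->
  (forall i j, i < j -> j < size s -> residuals_distinct L (nth [::] s i) (nth [::] s j)) ->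
  size s <= rep_count #|A| n.
Proof.
move=> L_PT s_distinct.
have size_reps : size (sim_reps #|A| n [set: A]) <= rep_count #|A| n.
  by apply: size_sim_reps; rewrite cardsT.
apply: leq_trans size_reps; apply: (pigeonhole_rel (P := sim_n n) (x0 := [::])).
  by move=> x _; apply: sim_reps_complete; rewrite ?cardsT //; apply/allP => y; rewrite inE.
move=> i j y lt_ij lt_j sim_i sim_j; have [w distinct_w] := s_distinct i j lt_ij lt_j.
apply: distinct_w; apply: L_PT; apply: sim_n_catr.
exact: sim_n_trans sim_i (sim_n_sym sim_j).
Qed.

Lemma leq_rep_count k : {homo rep_count k : a b / a <= b}.
Proof.
elim: k => [a b _ //| k IHk].
suff incr c : rep_count k.+1 c <= rep_count k.+1 c.+1.
  move=> a b /subnKC <-; elim: (b - a) => [|d IHd]; first by rewrite addn0.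
  by rewrite addnS (leq_trans IHd (incr _)).
rewrite !rep_countS leq_add2l.
have -> : iota 0 c.+1 = iota 0 c ++ [:: c] by rewrite -addn1 iotaD.
rewrite map_cat sumn_cat.
apply: leq_trans (leq_addr _ _); apply: leq_sumn_map => r; rewrite mem_iota => /andP [_ lt_rc].
by rewrite leq_mul ?leq_expn2r // leq_mul // IHk //; lia.
Qed.

Lemma rep_count1 j : rep_count 1 j = j.+1.
Proof.
rewrite rep_countS add1n; congr _.+1.
rewrite (eq_map (g := fun=> 1)) => [|r]; last by rewrite !muln1 exp1n.
elim: j => // j IHj.
by rewrite -[in iota 0 _]addn1 iotaD map_cat sumn_cat IHj addn1.
Qed.

Lemma rep_count2_le j : 2 <= j -> rep_count 2 j <= (j * j) ^ j.+1.
Proof.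
case: j => [|[|[|j]]] // _; set J := j.+3; rewrite rep_countS.
have term_le r : r \in iota 0 J ->
    (2 * rep_count 1 (J - r + 1)) ^ r * (2 * rep_count 1 (J - r)) <= (2 * J + 2) ^ J.
  rewrite mem_iota add0n !rep_count1 => /andP [_ lt_rJ].
  apply: (@leq_trans ((2 * J + 2) ^ r.+1)); last by apply: leq_pexp2l; lia.
  rewrite expnSr leq_mul //; last by lia.
  by case: r lt_rJ => [|r] lt_rJ; rewrite ?expn0 // leq_expn2r //; lia.
apply: leq_trans (leq_add (leqnn 1) (sumn_map_le_const term_le)) _.
rewrite size_iota expnS.
have pow_gt0 : 0 < (2 * J + 2) ^ J by rewrite expn_gt0 addn2.
apply: (@leq_trans (J * J * (2 * J + 2) ^ J)); first by move: pow_gt0; rewrite /J; nia.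
by rewrite leq_mul // leq_expn2r // /J; nia.
Qed.

Open Scope R_scope.

Lemma INR_addn (a b : nat) : INR (a + b)%N = INR a + INR b.
Proof. exact: plus_INR. Qed.

Lemma INR_muln (a b : nat) : INR (a * b)%N = INR a * INR b.
Proof. exact: mult_INR. Qed.

Lemma INR_subn (a b : nat) : (b <= a)%N -> INR (a - b)%N = INR a - INR b.
Proof. by move=> le_ba; apply: minus_INR; apply/leP. Qed.

Lemma INR_expn (a b : nat) : INR (a ^ b)%N = INR a ^ b.
Proof. by elim: b => // b IHb; rewrite expnS INR_muln IHb. Qed.

Lemma INR_leq (a b : nat) : (a <= b)%N -> INR a <= INR b.
Proof. by move=> le_ab; apply: le_INR; apply/leP. Qed.

Lemma INR_sumn_map_le (T : eqType) (s : seq T) (f : T -> nat) c :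
  (forall x, x \in s -> INR (f x) <= c) -> INR (sumn (map f s)) <= INR (size s) * c.
Proof.
elim: s => [|x s IHs] le_fc; first by rewrite /=; lra.
rewrite [sumn _]/= INR_addn [size _]/= S_INR.
have le_x : INR (f x) <= c by apply: le_fc; rewrite mem_head.
have le_s : INR (sumn (map f s)) <= INR (size s) * c.
  by apply: IHs => y y_in; apply: le_fc; rewrite inE y_in orbT.
lra.
Qed.

Lemma ln_le x y : 0 < x -> x <= y -> ln x <= ln y.
Proof. by move=> x_gt0 [lt_xy | ->]; [left; apply: ln_increasing | right]. Qed.

Lemma ln2_gt0 : 0 < ln 2.
Proof. by rewrite -ln_1; apply: ln_increasing; lra. Qed.

Lemma log2_le x y : 0 < x -> x <= y -> log2 x <= log2 y.
Proof.
move=> x_gt0 le_xy; apply: Rmult_le_compat_r; last exact: ln_le.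
by left; apply: Rinv_0_lt_compat; apply: ln2_gt0.
Qed.

Lemma log2_ge0 x : 1 <= x -> 0 <= log2 x.
Proof. by move=> x_ge1; rewrite -(Rmult_0_l (/ ln 2)) -ln_1; apply: log2_le; lra. Qed.

Lemma log2_ge1 x : 2 <= x -> 1 <= log2 x.
Proof.
move=> x_ge2; rewrite -(Rinv_r (ln 2)); last exact/Rgt_not_eq/ln2_gt0.
by apply: log2_le; lra.
Qed.

Lemma log2_mult x y : 0 < x -> 0 < y -> log2 (x * y) = log2 x + log2 y.
Proof. by move=> x_gt0 y_gt0; rewrite /log2 ln_mult //; field; apply/Rgt_not_eq/ln2_gt0. Qed.

Lemma Rpower2_log2 x : 0 < x -> Rpower 2 (log2 x) = x.
Proof. by move=> x_gt0; apply: Rpower_Rlog => //; lra. Qed.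

Lemma Rpower2_pow a n : Rpower 2 a ^ n = Rpower 2 (INR n * a).
Proof.
rewrite -Rpower_pow; last by rewrite /Rpower; apply: exp_pos.
by rewrite Rpower_mult Rmult_comm.
Qed.

Lemma Rpower2_le a b : a <= b -> Rpower 2 a <= Rpower 2 b.
Proof. by apply: Rle_Rpower; lra. Qed.

Lemma Rpower2_ge1 a : 0 <= a -> 1 <= Rpower 2 a.
Proof. by move=> a_ge0; rewrite -(Rpower_O 2); [apply: Rpower2_le | lra]. Qed.

(* The tangent line of the convex map [x ^ m.+1] at [y] lies below it. *)
Lemma pow_tangent_le m x y : 0 <= x -> 0 <= y ->
  (INR m.+1 * x - INR m * y) * y ^ m <= x ^ m.+1.
Proof.
move=> x_ge0 y_ge0.
suff : 0 <= INR m * y ^ m.+1 - INR m.+1 * y ^ m * x + x ^ m.+1 by rewrite /=; nra.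
elim: m => [|m IHm]; first by rewrite /=; lra.
have -> : INR m.+1 * y ^ m.+2 - INR m.+2 * y ^ m.+1 * x + x ^ m.+2 =
    x * (INR m * y ^ m.+1 - INR m.+1 * y ^ m * x + x ^ m.+1) + INR m.+1 * y ^ m * (y - x) ^ 2.
  by rewrite !S_INR /=; ring.
apply: Rplus_le_le_0_compat; first exact: Rmult_le_pos.
by apply: Rmult_le_pos; [apply: Rmult_le_pos; [apply: pos_INR | apply: pow_le] | apply: pow2_ge_0].
Qed.

Definition rep_exponent (k j : nat) : R :=
  INR k * ((INR j + 2 * INR k - 3) / (INR k - 1)) ^ (k - 1) * log2 (INR j) * log2 (INR k).

Lemma rep_exponent_ge0 k j : (2 <= k)%N -> (1 <= j)%N -> 0 <= rep_exponent k j.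
Proof.
move=> k_ge2 j_ge1; have := INR_leq k_ge2; have := INR_leq j_ge1; rewrite /= => j_ge1' k_ge2'.
apply: Rmult_le_pos; last by apply: log2_ge0; lra.
apply: Rmult_le_pos; last by apply: log2_ge0; lra.
apply: Rmult_le_pos; first exact: pos_INR.
by apply: pow_le; apply: Rle_mult_inv_pos; lra.
Qed.

Lemma rep_count2_le_Rpower j : (2 <= j)%N -> INR (rep_count 2 j) <= Rpower 2 (rep_exponent 2 j).
Proof.
move=> j_ge2; have j_ge2' : 2 <= INR j by apply: (INR_leq j_ge2).
apply: Rle_trans (INR_leq (rep_count2_le j_ge2)) _.
have -> : rep_exponent 2 j = INR j.+1 * log2 (INR j * INR j).
  have INR2 : INR 2 = 2 by [].
  have log2_2 : log2 2 = 1 by rewrite /log2; field; apply/Rgt_not_eq/ln2_gt0.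
  rewrite /rep_exponent INR2 log2_2 log2_mult ?S_INR; try lra.
  by rewrite /=; field.
by rewrite -Rpower2_pow Rpower2_log2 ?INR_expn ?INR_muln //; nra.
Qed.

Section ExponentStep.
Variables m j : nat.
Hypotheses (m_gt0 : (0 < m)%N) (j_ge2 : (2 <= j)%N).

Let m_ge1 : 1 <= INR m := INR_leq m_gt0.
Let j_ge2' : 2 <= INR j := INR_leq j_ge2.

Let X := (INR j + 2 * INR m.+2 - 3) / (INR m.+2 - 1).

(* Bounds [log2] of each term of the recursion for [rep_count m.+2 j]: it is
   [rep_exponent m.+2 j] with the factor [INR m.+2 * log2 (INR m.+2)] replaced by
   [INR m.+1 * log2 (INR m.+1)]. *)
Let budget := INR m.+1 * X ^ m.+1 * log2 (INR j) * log2 (INR m.+1).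

Let X_E : X = (INR j + 2 * INR m + 1) / (INR m + 1).
Proof. by rewrite /X !S_INR; congr (_ / _); ring. Qed.

Let X_ge0 : 0 <= X.
Proof. by rewrite X_E; apply: Rle_mult_inv_pos; lra. Qed.

Let X_pow_ge : INR j + 2 <= X ^ m.+1.
Proof.
have t_gt0 : 0 < (INR j + INR m) / (INR m + 1) by apply: Rdiv_lt_0_compat; lra.
have -> : X = 1 + (INR j + INR m) / (INR m + 1) by rewrite X_E; field; lra.
apply: Rle_trans _ (poly m.+1 _ t_gt0); rewrite S_INR.
have -> : (INR m + 1) * ((INR j + INR m) / (INR m + 1)) = INR j + INR m by field; lra.
lra.
Qed.

Let budget_ge0 : 0 <= budget.
Proof.
apply: Rmult_le_pos; last by apply: log2_ge0; rewrite S_INR; lra.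
apply: Rmult_le_pos; last by apply: log2_ge0; lra.
by apply: Rmult_le_pos; [apply: pos_INR | apply: pow_le; apply: X_ge0].
Qed.

Lemma arch_exponent_le r : (1 <= r)%N -> (r < j)%N ->
  INR r.+1 * rep_exponent m.+1 (j - r + 1) <= budget.
Proof.
move=> r_ge1 lt_rj; have r_ge1' : 1 <= INR r := INR_leq r_ge1.
have r1_le_j : INR r + 1 <= INR j by rewrite -S_INR; apply: INR_leq.
rewrite /rep_exponent subSS subn0 INR_addn INR_subn ?(ltnW lt_rj) // [INR 1]/=.
set Y := (_ / _).
have Y_E : Y = (INR j - INR r + 2 * INR m) / INR m by rewrite /Y S_INR; congr (_ / _); ring.
have tangent : INR r.+1 * Y ^ m <= X ^ m.+1.
  have <- : INR m.+1 * X - INR m * Y = INR r.+1 by rewrite X_E Y_E !S_INR; field; lra.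
  by apply: pow_tangent_le; [apply: X_ge0 | rewrite Y_E; apply: Rle_mult_inv_pos; lra].
have log_le : log2 (INR j - INR r + 1) <= log2 (INR j) by apply: log2_le; lra.
have log_ge0 : 0 <= log2 (INR j - INR r + 1) by apply: log2_ge0; lra.
have pow_ge0 : 0 <= INR r.+1 * Y ^ m.
  apply: Rmult_le_pos; first exact: pos_INR.
  by apply: pow_le; rewrite Y_E; apply: Rle_mult_inv_pos; lra.
have scale_ge0 : 0 <= INR m.+1 * log2 (INR m.+1).
  by apply: Rmult_le_pos; [apply: pos_INR | apply: log2_ge0; rewrite S_INR; lra].
have -> : INR r.+1 * (INR m.+1 * Y ^ m * log2 (INR j - INR r + 1) * log2 (INR m.+1)) =
    INR r.+1 * Y ^ m * log2 (INR j - INR r + 1) * (INR m.+1 * log2 (INR m.+1)) by ring.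
rewrite /budget.
have -> : INR m.+1 * X ^ m.+1 * log2 (INR j) * log2 (INR m.+1) =
    X ^ m.+1 * log2 (INR j) * (INR m.+1 * log2 (INR m.+1)) by ring.
by apply: Rmult_le_compat_r => //; apply: Rmult_le_compat.
Qed.

Hypothesis rep_count_le_IH :
  forall i, (2 <= i)%N -> INR (rep_count m.+1 i) <= Rpower 2 (rep_exponent m.+1 i).

Lemma arch_term_le r : (r < j)%N ->
  INR (rep_count m.+1 (j - r + 1) ^ r * rep_count m.+1 (j - r))%N <= Rpower 2 budget.
Proof.
case: r => [|r] lt_rj.
  (* the [r = 0] term is dominated by half the [r = 1] bound *)
  rewrite expn0 mul1n subn0; apply: Rle_trans (rep_count_le_IH j_ge2) (Rpower2_le _).
  have := arch_exponent_le (leqnn 1) j_ge2; rewrite subnK ?(ltnW j_ge2) //.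
  have := @rep_exponent_ge0 m.+1 j m_gt0 (ltnW j_ge2).
  by rewrite /=; lra.
have i_ge2 : (2 <= j - r.+1 + 1)%N by rewrite addn1 ltnS subn_gt0.
have mono : (rep_count m.+1 (j - r.+1) <= rep_count m.+1 (j - r.+1 + 1))%N.
  by apply: leq_rep_count; rewrite leq_addr.
apply: Rle_trans (INR_leq (leq_mul (leqnn _) mono)) _.
rewrite -expnSr INR_expn.
apply: Rle_trans (pow_incr _ _ r.+2 (conj (pos_INR _) (rep_count_le_IH i_ge2))) _.
by rewrite Rpower2_pow; apply: Rpower2_le; apply: arch_exponent_le.
Qed.

Lemma rep_count_step_le :
  INR (rep_count m.+2 j) <= 1 + INR j * (INR m.+2 ^ j * Rpower 2 budget).
Proof.
rewrite rep_countS INR_addn; apply: Rplus_le_compat_l.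
rewrite -[in INR j](size_iota 0 j); apply: INR_sumn_map_le => r.
rewrite mem_iota => /andP [_ lt_rj].
rewrite expnMn mulnACA -expnSr INR_muln INR_expn.
apply: Rmult_le_compat; [apply: pow_le; apply: pos_INR | apply: pos_INR | | exact: arch_term_le].
by apply: Rle_pow; [rewrite S_INR; have := pos_INR m.+1; lra | apply/leP].
Qed.

Lemma exponent_step_le :
  log2 (INR j + 2) + INR j * log2 (INR m.+2) + budget <= rep_exponent m.+2 j.
Proof.
rewrite /rep_exponent subSS subn0 -/X /budget.
set P := X ^ m.+1; set lj := log2 (INR j); set lK := log2 (INR m.+2); set lk := log2 (INR m.+1).
have P_ge : INR j + 2 <= P := X_pow_ge.
have lj_ge1 : 1 <= lj by apply: log2_ge1.
have lK_ge1 : 1 <= lK by apply: log2_ge1; rewrite !S_INR; lra.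
have lk_ge0 : 0 <= lk by apply: log2_ge0; rewrite S_INR; lra.
have lk_le : lk <= lK by apply: log2_le; rewrite !S_INR; lra.
have log_le : log2 (INR j + 2) <= 2 * lj.
  rewrite /lj (_ : 2 * _ = log2 (INR j) + log2 (INR j)); last by ring.
  by rewrite -log2_mult; try lra; apply: log2_le; nra.
rewrite -/P -/lj -/lK -/lk -/P !S_INR.
have G1 : 0 <= (INR m + 1) * (lK - lk) * (P * lj).
  by apply: Rmult_le_pos; apply: Rmult_le_pos; lra.
have G2 : 0 <= (P - (INR j + 2)) * lj * lK.
  by apply: Rmult_le_pos; [apply: Rmult_le_pos|]; lra.
have G3 : 0 <= INR j * (lj - 1) * lK.
  by apply: Rmult_le_pos; [apply: Rmult_le_pos|]; lra.
have G4 : 0 <= 2 * lj * (lK - 1).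
  by apply: Rmult_le_pos; [apply: Rmult_le_pos|]; lra.
nra.
Qed.

Lemma rep_count_step : INR (rep_count m.+2 j) <= Rpower 2 (rep_exponent m.+2 j).
Proof.
apply: Rle_trans rep_count_step_le _; apply: Rle_trans (Rpower2_le exponent_step_le).
have pow_ge1 : 1 <= INR m.+2 ^ j * Rpower 2 budget.
  rewrite -[1]Rmult_1_l; apply: Rmult_le_compat; try lra.
    by apply: pow_R1_Rle; rewrite !S_INR; have := pos_INR m; lra.
  exact: Rpower2_ge1 budget_ge0.
apply: (@Rle_trans _ ((INR j + 2) * (INR m.+2 ^ j * Rpower 2 budget))); first nra.
have K_gt0 : 0 < INR m.+2 by apply: lt_0_INR; apply/ltP.
rewrite !Rpower_plus -Rpower2_pow !Rpower2_log2 //; last lra.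
by rewrite Rmult_assoc; apply: Rle_refl.
Qed.

End ExponentStep.

Lemma rep_count_le k j : (2 <= k)%N -> (2 <= j)%N ->
  INR (rep_count k j) <= Rpower 2 (rep_exponent k j).
Proof.
move=> k_ge2; rewrite -(subnK k_ge2); elim: (k - 2)%N j => [|m IHm] j j_ge2.
  exact: rep_count2_le_Rpower.
by rewrite addSn addn2; apply: rep_count_step => // i i_ge2; rewrite -addn2; apply: IHm.
Qed.

Close Scope R_scope.

Theorem theorem2 (A : finType) (k n : nat) (L : seq A -> Prop) :
  #|A| = k -> (1 < k)%N -> (2 <= n)%N ->
  n_PT n L ->
  canonical_dfa_states_le L
    (Rpower 2 (INR k * ((INR n + 2 * INR k - 3) / (INR k - 1)) ^ (k - 1)
               * log2 (INR n) * log2 (INR k)))%R.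
Proof.
move=> card_A k_gt1 n_ge2 L_PT s s_distinct.
have size_s := residuals_distinct_count L_PT s_distinct; rewrite card_A in size_s.
exact: Rle_trans (INR_leq size_s) (rep_count_le k_gt1 n_ge2).
Qed.
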